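(* Let $n$ and $0<n_1<\cdots<n_d<n$ be integers with $m_1=n_1$, $m_k=n_k-n_{k-1}$ ($2\le k\le d$), $m_{d+1}=n-n_d$, and regard $\mathrm{Flag}(n_1,\dots,n_d;n)=\{(VJ_1V^{\mathsf T},\dots,VJ_dV^{\mathsf T}):V\in\mathrm{O}(n)\}$ as a submanifold of $(\mathbb{R}^{n\times n})^d$ with the Frobenius inner product. Let $V(t)$ be a differentiable curve in $\mathrm{O}(n)$ with $\Lambda(t)=V(t)^{\mathsf T}\dot V(t)$ satisfying $\Lambda(k,k)\equiv0$ ($k=1,\dots,d+1$), $c(t)=V(t)(J_1,\dots,J_d)V(t)^{\mathsf T}$, and let $X(t)\in\mathfrak{so}(n)$ be differentiable with $X(k,k)\equiv0$ ($k=1,\dots,d+1$). Let \[ T_2(t)=V(t)\big(\Lambda XJ_1+J_1X\Lambda,\dots,\Lambda XJ_d+J_dX\Lambda\big)V(t)^{\mathsf T}. \] Then the orthogonal projection of $T_2(t)$ onto $\mathbb{T}_{c(t)}\mathrm{Flag}(n_1,\dots,n_d;n)$ equals $V(t)(W_1(t),\dots,W_d(t))V(t)^{\mathsf T}$, where $W_1,\dots,W_d$ are symmetric with blocks \[ W_k(p,q)=\begin{cases}\sum_{s=1}^{d+1}X(k,s)\Lambda(s,q)-\sum_{s=1}^{d+1}\Lambda(s,k)^{\mathsf T}X(q,s)^{\mathsf T}, & p=k,\ q\neq k,\\[2pt] \sum_{s=1}^{d+1}\Lambda(s,p)^{\mathsf T}X(k,s)^{\mathsf T}-\sum_{s=1}^{d+1}X(p,s)\Lambda(s,k),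 & q=k,\ p\neq k,\\[2pt] 0, & \text{otherwise}.\end{cases} \]
   Context: $J_k=\operatorname{diag}(-I_{m_1},\dots,-I_{m_{k-1}},I_{m_k},-I_{m_{k+1}},\dots,-I_{m_{d+1}})$. $V(X_1,\dots,X_d)V^{\mathsf T}$ denotes $(VX_1V^{\mathsf T},\dots,VX_dV^{\mathsf T})$. For an $n\times n$ matrix $M$, $M(p,q)$ denotes its $(p,q)$ block in the partition $n=m_1+\cdots+m_{d+1}$. *)

From HB Require Import structures.
From mathcomp Require Import all_boot all_order all_algebra.
From mathcomp Require Import all_classical all_reals all_analysis.
Set Implicit Arguments. Unset Strict Implicit. Unset Printing Implicit Defensive.
Import Order.TTheory GRing.Theory Num.Theory.
Import numFieldNormedType.Exports.
Local Open Scope classical_set_scope.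
Local Open Scope ring_scope.

Section FlagDefs.
Variables (R : realType) (n d : nat) (ns : 'I_d -> nat).

(* 0-based block index of i : 'I_n in the partition n = m_1 + ... + m_{d+1}
   given by 0 < n_1 < ... < n_d < n  (ns j = n_{j+1}):
   blk i = k  iff  n_k <= i < n_{k+1}  (n_0 := 0, n_{d+1} := n). *)
Definition blk (i : 'I_n) : nat := (\sum_(j < d) (ns j <= i))%N.

Definition restr (M : 'M[R]_n) (p q : nat) : 'M[R]_n :=
  \matrix_(i, j) (if (blk i == p) && (blk j == q) then M i j else 0).

(* J_{k+1} = diag(-I, .., -I, I_{m_{k+1}}, -I, .., -I), for k : 'I_d. *)
Definition Jk (k : 'I_d) : 'M[R]_n :=
  \matrix_(i, j) (if i == j then (if blk i == k then 1 else -1) else 0).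

Definition orthogonal_mx (U : 'M[R]_n) : Prop := U^T *m U = 1%:M.

Definition inFlag (Z : 'I_d -> 'M[R]_n) : Prop :=
  exists U : 'M[R]_n, orthogonal_mx U /\ forall k, Z k = U *m Jk k *m U^T.

Definition tangentFlag (c : 'I_d -> 'M[R]_n) : set ('I_d -> 'M[R]_n) :=
  [set Y | exists g : 'I_d -> R -> 'M[R]_n,
     [/\ forall t, inFlag (fun k => g k t),
         forall k, g k 0 = c k,
         forall k t, derivable (g k) t 1 &
         forall k, Y k = 'D_1 (g k) 0]].

Definition frob (A B : 'I_d -> 'M[R]_n) : R := \sum_(k < d) \tr ((A k)^T *m B k).

Definition is_orth_proj (S : set ('I_d -> 'M[R]_n)) (T P : 'I_d -> 'M[R]_n) : Prop :=
  S P /\ forall Y, S Y -> frob (fun k => T k - P k) Y = 0.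

(* The matrices W_k of the statement (k : 'I_d stands for W_{k+1}). *)
Definition Wk (X L : 'M[R]_n) (k : 'I_d) : 'M[R]_n :=
  \matrix_(i, j)
   (let p := blk i in let q := blk j in
    if (p == k) && (q != k) then
      (\sum_(s < d.+1) (restr X k s *m restr L s q)
       - \sum_(s < d.+1) ((restr L s k)^T *m (restr X q s)^T)) i j
    else if (q == k) && (p != k) then
      (\sum_(s < d.+1) ((restr L s p)^T *m (restr X k s)^T)
       - \sum_(s < d.+1) (restr X p s *m restr L s k)) i j
    else 0).

End FlagDefs.

From HB Require Import structures.
From mathcomp Require Import all_boot all_order all_algebra.
From mathcomp Require Import all_classical all_reals all_analysis.
From mathcomp Require Import lra.
Set Implicit Arguments. Unset Strict Implicit. Unset Printing Implicit Defensive.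
Import Order.TTheory GRing.Theory Num.Theory.
Import numFieldNormedType.Exports.
Local Open Scope classical_set_scope.
Local Open Scope ring_scope.

(** The tangent space of the flag manifold at [c = V (J_1, ..., J_d) V^T]
    consists of the tuples [V ([A, J_k])_k V^T] with [A] skew; every tangent
    vector [Y] satisfies [Y_k c_k + c_k Y_k = 0], because [c_k(s)^2 = 1] along
    any curve in the manifold.  Matrices commuting with the symmetric
    involution [c_k] are trace-orthogonal to those anticommuting with it, so
    the projection of [T_k] is its anticommuting part [(T_k - c_k T_k c_k)/2].
    Since [X] and [Lambda] are skew, [(X Lambda)^T = Lambda X], and this part
    is [V [A, J_k] V^T] with [A = ((X Lambda)^T - X Lambda)/2]; reading
    [[A, J_k]] block by block gives the matrices [W_k].  Tangency of
    [V [A, J_k] V^T] is witnessed by the Cayley curve of [A]. *)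

Section MatrixDerivative.
Context {R : realFieldType} {V : normedModType R}.

Lemma is_derive_mxP m p (M : V -> 'M[R]_(m, p)) x v dM :
  is_derive x v M dM <-> forall i j, is_derive x v (fun s => M s i j) (dM i j).
Proof.
split=> [[dMx <-] i j|dMij].
  apply: DeriveDef; first by move/derivable_mxP: dMx; apply.
  by rewrite derive_mx // mxE.
have dMx : derivable M x v by apply/derivable_mxP => i j; case: (dMij i j).
apply: DeriveDef => //; rewrite derive_mx //.
by apply/matrixP => i j; rewrite mxE derive_val.
Qed.

Lemma is_derive_big_sum (I : Type) (r : seq I) (P : pred I) (F : I -> V -> R)
    dF x v :
  (forall i, is_derive x v (F i) (dF i)) ->
  is_derive x v (fun s => \sum_(i <- r | P i) F i s) (\sum_(i <- r | P i) dF i).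
Proof.
move=> dFi; rewrite -fct_sumE.
elim/big_ind2: _ => [|f df g dg|i _];
  [exact: is_derive_cst | exact: is_deriveD | exact: dFi].
Qed.

Lemma derivable_big_prod (I : Type) (r : seq I) (P : pred I) (F : I -> V -> R)
    x v :
  (forall i, derivable (F i) x v) ->
  derivable (fun s => \prod_(i <- r | P i) F i s) x v.
Proof.
move=> dFi; rewrite -fct_prodE.
elim/big_ind: _ => [|f g|i _];
  [exact: derivable_cst | exact: derivableM | exact: dFi].
Qed.

Lemma is_derive_mulmx m p q (F : V -> 'M[R]_(m, p)) (G : V -> 'M[R]_(p, q))
    x v dF dG :
  is_derive x v F dF -> is_derive x v G dG ->
  is_derive x v (fun s => F s *m G s) (dF *m G x + F x *m dG).
Proof.
move=> /is_derive_mxP dFij /is_derive_mxP dGij; apply/is_derive_mxP => i j.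
rewrite !mxE -big_split /=.
under [fun s => _]funext => s do rewrite mxE.
apply: is_derive_eq; first by apply: is_derive_big_sum => k; exact: is_deriveM.
by apply: eq_bigr => k _; rewrite addrC /GRing.scale /= mulrC [G x k j * _]mulrC.
Qed.

Lemma is_derive_trmx m p (F : V -> 'M[R]_(m, p)) x v dF :
  is_derive x v F dF -> is_derive x v (fun s => (F s)^T) dF^T.
Proof.
move=> /is_derive_mxP dFij; apply/is_derive_mxP => i j; rewrite mxE.
by under [fun s => _]funext => s do rewrite mxE.
Qed.

Lemma is_derive_mulmx_const m p q (F : V -> 'M[R]_(m, p))
    (G : V -> 'M[R]_(p, q)) (C : 'M[R]_(m, q)) x v dF dG :
  is_derive x v F dF -> is_derive x v G dG -> (forall s, F s *m G s = C) ->
  dF *m G x + F x *m dG = 0.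
Proof.
move=> dFx dGx FGC; have [_ <-] := is_derive_mulmx dFx dGx.
by rewrite (funext FGC); exact: derive_cst.
Qed.

End MatrixDerivative.

Section Involutions.
Context {R : realFieldType} {n : nat}.
Implicit Types A B C J L M N V X Y : 'M[R]_n.

Lemma mulmx_conj_orthogonal V A B : V^T *m V = 1%:M ->
  (V *m A *m V^T) *m (V *m B *m V^T) = V *m (A *m B) *m V^T.
Proof. by move=> VtV; rewrite !mulmxA -(mulmxA _ V^T) VtV mulmx1. Qed.

Lemma mxtrace_mul_comm_anticomm C M Y : C *m C = 1%:M ->
  M *m C = C *m M -> Y *m C = - (C *m Y) -> \tr (M *m Y) = 0.
Proof.
move=> CC MC YC; apply/eqP; rewrite -eqNr; apply/eqP.
rewrite {2}(_ : M *m Y = M *m (Y *m C) *m C); last by rewrite -!mulmxA CC mulmx1.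
rewrite YC mulmxN mulNmx (mulmxA M C Y) MC raddfN /=.
by congr (- _); rewrite [RHS]mxtrace_mulC !mulmxA CC mul1mx.
Qed.

Lemma commutator_skew_mulmx J L X : J *m J = 1%:M -> L^T = - L -> X^T = - X ->
  let N := L *m X *m J + J *m X *m L in
  ((X *m L)^T - X *m L) *m J - J *m ((X *m L)^T - X *m L) = N - J *m N *m J.
Proof.
move=> JJ skL skX N.
have -> : J *m N *m J = J *m L *m X + X *m L *m J.
  rewrite /N mulmxDr mulmxDl !mulmxA JJ mul1mx -!mulmxA JJ mulmx1.
  by rewrite !mulmxA addrC.
rewrite /N trmx_mul skL skX mulmxN mulNmx opprK mulmxBl mulmxBr !mulmxA.
move: (L *m X *m J) (X *m L *m J) (J *m L *m X) (J *m X *m L) => a b c e.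
by apply/matrixP => i j; rewrite !mxE; lra.
Qed.

Lemma commute_sub_half_conj J N : J *m J = 1%:M ->
  (N - 2^-1 *: (N - J *m N *m J)) *m J = J *m (N - 2^-1 *: (N - J *m N *m J)).
Proof.
move=> JJ; rewrite !(mulmxBl, mulmxBr) -scalemxAl -scalemxAr !(mulmxBl, mulmxBr).
rewrite -(mulmxA _ J J) JJ mulmx1 !mulmxA JJ mul1mx.
move: (N *m J) (J *m N) => P Q; apply/matrixP => i j; rewrite !mxE; lra.
Qed.

End Involutions.

Section CayleyTransform.
Context {R : realFieldType}.

Lemma is_derive_scalel {W : normedModType R} (w : W) (x : R) :
  is_derive x 1 (fun s : R => s *: w) w.
Proof.
by apply: DeriveDef; [exact: diff_derivable | rewrite deriveE // diff_val scale1r].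
Qed.

Lemma derivable_det {V : normedModType R} k (M : V -> 'M[R]_k) x v :
  derivable M x v -> derivable (fun s => \det (M s)) x v.
Proof.
move/derivable_mxP => dM; rewrite /determinant.
apply: ex_derive; apply: is_derive_big_sum => σ; apply: derivableP.
by apply: (derivableM (derivable_cst _ _ _)); exact: derivable_big_prod.
Qed.

Lemma derivable_invmx {V : normedModType R} k (M : V -> 'M[R]_k) x v :
  (forall s, M s \in unitmx) -> derivable M x v ->
  derivable (fun s => invmx (M s)) x v.
Proof.
move=> Munit dM; apply/derivable_mxP => i j.
under [fun s => _]funext => s do rewrite /invmx Munit !mxE /cofactor.
apply: derivableM; last apply: (derivableM (derivable_cst _ _ _)).
  by apply: derivableV; [rewrite -unitfE -unitmxE | exact: derivable_det].
apply: derivable_det; apply/derivable_mxP => a b.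
under [fun s => _]funext => s do rewrite !mxE.
by move/derivable_mxP: dM; apply.
Qed.

Lemma unitmx1B_skew k (A : 'M[R]_k) : A^T = - A -> 1%:M - A \in unitmx.
Proof.
(* [u (1 - A) = 0] gives [u u^T = u A u^T], a skew 1x1 matrix, hence [0]. *)
move=> skA; rewrite -row_free_unit; apply: inj_row_free => u.
rewrite mulmxBr mulmx1 => /eqP; rewrite subr_eq0 => /eqP uA.
have uAu0 : (u *m A *m u^T) 0 0 = 0.
  have : (u *m A *m u^T)^T = - (u *m A *m u^T).
    by rewrite !trmx_mul trmxK skA mulNmx mulmxN mulmxA.
  by move/matrixP/(_ 0 0); rewrite mxE [RHS]mxE => /eqP; rewrite eq_sym eqNr => /eqP.
have : (u *m u^T) 0 0 = 0 by rewrite {1}uA.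
rewrite mxE; under eq_bigr do rewrite mxE -expr2.
move/psumr_eq0P => sq0; apply/rowP => j; rewrite [RHS]mxE.
by apply/eqP; rewrite -sqrf_eq0 sq0 // => i _; exact: sqr_ge0.
Qed.

Lemma cayley_curve k (A : 'M[R]_k) : A^T = - A ->
  exists U : R -> 'M[R]_k, [/\ forall s, (U s)^T *m U s = 1%:M, U 0 = 1%:M,
    forall s : R, derivable U s 1 & is_derive (0 : R) 1 U A].
Proof.
move=> skA; set B := 2^-1 *: A.
have skB : B^T = - B by rewrite linearZ /= skA scalerN.
pose P s : 'M[R]_k := 1%:M - s *: B.
pose Q s : 'M[R]_k := 1%:M + s *: B.
have PT s : (P s)^T = Q s by rewrite linearB /= trmx1 linearZ /= skB scalerN opprK.
have P_unit s : P s \in unitmx.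
  by apply: unitmx1B_skew; rewrite linearZ /= skB scalerN.
have Q_unit s : Q s \in unitmx by rewrite -PT unitmx_tr.
have PQC s : P s *m Q s = Q s *m P s.
  rewrite /P /Q mulmxDr mulmxBr !mulmxBl !mulmxDl !mulmx1 !mul1mx.
  by rewrite opprD !addrA addrNK addrK.
have dP (s : R) : is_derive s 1 P (- B).
  apply: is_derive_eq (is_deriveB (is_derive_cst _ _ _) (is_derive_scalel B s)) _.
  by rewrite sub0r.
have dQ (s : R) : is_derive s 1 Q B.
  apply: is_derive_eq (is_deriveD (is_derive_cst _ _ _) (is_derive_scalel B s)) _.
  by rewrite add0r.
pose U s := Q s *m invmx (P s).
have U0 : U 0 = 1%:M by rewrite /U /P /Q !scale0r !subr0 addr0 invmx1 mulmx1.
have dU (s : R) : derivable U s 1.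
  have [dPs _] := dP s.
  by have [] := is_derive_mulmx (dQ s) (derivableP (derivable_invmx P_unit dPs)).
exists U; split => // [s|].
  have QT : (Q s)^T = P s by rewrite -PT trmxK.
  rewrite /U trmx_mul trmx_inv PT QT.
  by rewrite mulmxA -(mulmxA _ (P s)) PQC mulmxA (mulVmx (Q_unit s)) mul1mx mulmxV.
(* Differentiating [U s *m P s = Q s] at [0] gives [U'(0) - B = B]. *)
have UP : (fun s => U s *m P s) = Q.
  by apply/funext => s; rewrite -mulmxA mulVmx ?mulmx1.
have [_ DQ0] := dQ 0.
have [_ DUP0] := is_derive_mulmx (derivableP (dU 0)) (dP 0).
rewrite UP DQ0 U0 /P scale0r subr0 mulmx1 mul1mx in DUP0.
apply: DeriveDef => //.
have -> : 'D_1 U 0 = B + B by apply/eqP; rewrite -subr_eq -DUP0.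
by rewrite /B -scalerDl -[2^-1]mul1r -splitr scale1r.
Qed.

End CayleyTransform.

Section BlockFormula.
Variables (R : realType) (n d : nat) (ns : 'I_d -> nat).
Local Notation blk := (blk ns).
Local Notation restr := (restr ns).
Local Notation J := (Jk R n ns).

Lemma blk_lt (i : 'I_n) : (blk i < d.+1)%N.
Proof.
rewrite ltnS -[X in (_ <= X)%N]card_ord -sum1_card.
by apply: leq_sum => j _; exact: leq_b1.
Qed.

Lemma sum_restr_mulmx (X L : 'M[R]_n) (p q : nat) :
  \sum_(s < d.+1) restr X p s *m restr L s q = restr (X *m L) p q.
Proof.
apply/matrixP => i j; rewrite summxE; under eq_bigr do rewrite mxE.
rewrite exchange_big !mxE /=.
case: (boolP ((blk i == p) && (blk j == q))) => [/andP[/eqP <- /eqP <-] | Npq].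
  apply: eq_bigr => m _; rewrite (bigD1 (Ordinal (blk_lt m))) //= big1 => [|s Ns].
    by rewrite !mxE !eqxx addr0.
  move: Ns; rewrite -val_eqE /= eq_sym !mxE eqxx => /negbTE ->.
  by rewrite andbF mulr0.
rewrite big1 // => m _; rewrite big1 // => s _; rewrite !mxE.
by case: (blk i == p) Npq; case: (blk j == q) => //= _; rewrite ?andbF ?mulr0 ?mul0r.
Qed.

Definition blk_sign (k : 'I_d) (i : 'I_n) : R := if blk i == k then 1 else -1.

Lemma Jk_diag k : J k = diag_mx (\row_i blk_sign k i).
Proof.
apply/matrixP => i j; rewrite !mxE.
by rewrite /blk_sign; case: eqP => [->|_]; rewrite ?mulr1n ?mulr0n.
Qed.

Lemma trmx_Jk k : (J k)^T = J k.
Proof. by rewrite Jk_diag tr_diag_mx. Qed.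

Lemma mulmx_Jk_Jk k : J k *m J k = 1%:M.
Proof.
rewrite {1}Jk_diag mul_diag_mx; apply/matrixP => i j; rewrite !mxE /blk_sign.
by case: (i == j); case: (blk i == k); rewrite ?mulr0 ?mulrNN ?mulr1.
Qed.

Lemma sum_restr_trmx_mulmx (X L : 'M[R]_n) (p q : nat) :
  \sum_(s < d.+1) (restr L s p)^T *m (restr X q s)^T = (restr (X *m L) q p)^T.
Proof.
under eq_bigr do rewrite -trmx_mul.
by rewrite -linear_sum sum_restr_mulmx.
Qed.

Lemma Wk_commutator (X L : 'M[R]_n) k :
  Wk ns X L k =
  2^-1 *: (((X *m L)^T - X *m L) *m J k - J k *m ((X *m L)^T - X *m L)).
Proof.
rewrite Jk_diag mul_mx_diag mul_diag_mx.
apply/matrixP => i j; rewrite !mxE /=.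
rewrite !sum_restr_mulmx !sum_restr_trmx_mulmx !mxE /blk_sign.
have [ik | ik] := eqVneq (blk i) k; have [jk | jk] := eqVneq (blk j) k.
all: rewrite ?eqxx /=; lra.
Qed.

End BlockFormula.

Section FlagTangentSpace.
Variables (R : realType) (n d : nat) (ns : 'I_d -> nat).
Local Notation J := (Jk R n ns).

Lemma orthogonal_curve_skew (V : R -> 'M[R]_n) t :
  (forall s, orthogonal_mx (V s)) -> derivable V t 1 ->
  ((V t)^T *m 'D_1 V t)^T = - ((V t)^T *m 'D_1 V t).
Proof.
move=> Vo /derivableP dV.
have := is_derive_mulmx_const (is_derive_trmx dV) dV Vo.
by rewrite trmx_mul trmxK => /eqP; rewrite addr_eq0 => /eqP.
Qed.

Lemma inFlag_sym (Z : 'I_d -> 'M[R]_n) k : inFlag ns Z -> (Z k)^T = Z k.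
Proof. by case=> U [_ ->]; rewrite !trmx_mul trmxK trmx_Jk mulmxA. Qed.

Lemma inFlag_involutive (Z : 'I_d -> 'M[R]_n) k :
  inFlag ns Z -> Z k *m Z k = 1%:M.
Proof.
case=> U [Uo ->]; rewrite mulmx_conj_orthogonal // mulmx_Jk_Jk mulmx1.
exact: mulmx1C.
Qed.

Lemma tangentFlag_inFlag (c Y : 'I_d -> 'M[R]_n) :
  tangentFlag ns c Y -> inFlag ns c.
Proof. by case=> g [gF g0 _ _]; rewrite -(funext g0); exact: gF. Qed.

Lemma tangentFlag_anticomm (c Y : 'I_d -> 'M[R]_n) k :
  tangentFlag ns c Y -> Y k *m c k = - (c k *m Y k).
Proof.
case=> g [gF g0 gd gD].
have dg : is_derive (0 : R) 1 (g k) (Y k) by rewrite gD; exact: derivableP.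
have := is_derive_mulmx_const dg dg (fun s => inFlag_involutive k (gF s)).
by rewrite g0 => /eqP; rewrite addr_eq0 => /eqP.
Qed.

Lemma frob_tangentFlag_commute (c M Y : 'I_d -> 'M[R]_n) : tangentFlag ns c Y ->
  (forall k, M k *m c k = c k *m M k) -> frob M Y = 0.
Proof.
move=> Yc Mc; apply: big1 => k _; have cF := tangentFlag_inFlag Yc.
apply: (mxtrace_mul_comm_anticomm (inFlag_involutive k cF)); last first.
  exact: tangentFlag_anticomm.
have cs := inFlag_sym k cF.
by rewrite -{1}cs -trmx_mul -Mc trmx_mul cs.
Qed.

Lemma tangentFlag_commutator (V A : 'M[R]_n) : orthogonal_mx V -> A^T = - A ->
  tangentFlag ns (fun k => V *m J k *m V^T)
    (fun k => V *m (A *m J k - J k *m A) *m V^T).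
Proof.
move=> Vo skA; have [U [Uo U0 dU dU0]] := cayley_curve skA.
pose W s := V *m U s.
have dW (s : R) dUs : is_derive s 1 U dUs -> is_derive s 1 W (V *m dUs).
  move=> dUx; apply: is_derive_eq (is_derive_mulmx (is_derive_cst V s 1) dUx) _.
  by rewrite mul0mx add0r.
have dg k (s : R) dWs : is_derive s 1 W dWs ->
    is_derive s 1 (fun s => W s *m J k *m (W s)^T)
      (dWs *m J k *m (W s)^T + W s *m J k *m dWs^T).
  move=> dWx; apply: is_derive_eq.
    exact: is_derive_mulmx (is_derive_mulmx dWx (is_derive_cst _ _ _))
                           (is_derive_trmx dWx).
  by rewrite mulmx0 addr0.
exists (fun k s => W s *m J k *m (W s)^T); split.
- move=> s; exists (W s); split => //.
  by rewrite /orthogonal_mx trmx_mul mulmxA -(mulmxA _ V^T) Vo mulmx1 Uo.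
- by move=> k; rewrite /W U0 mulmx1.
- by move=> k s; have [] := dg k s _ (dW s _ (derivableP (dU s))).
- move=> k; have [_ ->] := dg k 0 _ (dW 0 _ dU0).
  by rewrite /W U0 mulmx1 trmx_mul skA mulNmx mulmxN mulmxBr mulmxBl !mulmxA.
Qed.

End FlagTangentSpace.

Theorem lemmaA1 (R : realType) (n d : nat) (ns : 'I_d -> nat)
  (ns_pos : forall i : 'I_d, (0 < ns i)%N)
  (ns_lt : forall i : 'I_d, (ns i < n)%N)
  (ns_incr : forall i j : 'I_d, (i < j)%N -> (ns i < ns j)%N)
  (V X : R -> 'M[R]_n)
  (V_orth : forall t, orthogonal_mx (V t))
  (V_der : forall t, derivable V t 1)
  (L_diag : forall t (k : nat), (k <= d)%N ->
     restr ns ((V t)^T *m 'D_1 V t) k k = 0)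
  (X_der : forall t, derivable X t 1)
  (X_skew : forall t, (X t)^T = - X t)
  (X_diag : forall t (k : nat), (k <= d)%N -> restr ns (X t) k k = 0) :
  forall t : R,
    let L := (V t)^T *m 'D_1 V t in
    let c := fun k : 'I_d => V t *m Jk R n ns k *m (V t)^T in
    let T2 := fun k : 'I_d =>
      V t *m (L *m X t *m Jk R n ns k + Jk R n ns k *m X t *m L) *m (V t)^T in
    (forall k : 'I_d, (Wk ns (X t) L k)^T = Wk ns (X t) L k) /\
    is_orth_proj (tangentFlag ns c) T2
      (fun k : 'I_d => V t *m Wk ns (X t) L k *m (V t)^T).
Proof.
move=> t L c T2; have VtV : (V t)^T *m V t = 1%:M := V_orth t.
have skL : L^T = - L := orthogonal_curve_skew V_orth (V_der t).
set M := (X t *m L)^T - X t *m L.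
have skM : M^T = - M by rewrite linearB /= trmxK opprB.
have WkE k : let N := L *m X t *m Jk R n ns k + Jk R n ns k *m X t *m L in
    Wk ns (X t) L k = 2^-1 *: (N - Jk R n ns k *m N *m Jk R n ns k).
  by rewrite Wk_commutator commutator_skew_mulmx // mulmx_Jk_Jk.
split=> [k | ].
  rewrite Wk_commutator -/M linearZ /= linearB /= !trmx_mul trmx_Jk skM.
  by rewrite mulmxN mulNmx opprK addrC.
split.
  have -> : (fun k => V t *m Wk ns (X t) L k *m (V t)^T) =
      fun k => V t *m (2^-1 *: M *m Jk R n ns k - Jk R n ns k *m (2^-1 *: M))
                   *m (V t)^T.
    by apply/funext => k; rewrite Wk_commutator scalerBr scalemxAl scalemxAr.
  by apply: tangentFlag_commutator; rewrite // linearZ /= skM scalerN.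
move=> Y /frob_tangentFlag_commute; apply=> k.
rewrite /T2 /c -mulmxBl -mulmxBr !mulmx_conj_orthogonal //.
by rewrite WkE commute_sub_half_conj // mulmx_Jk_Jk.
Qed.
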